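(* If $(H,R)$ is a semiquasitriangular Hopf algebra, then $R_{12}R_{13}R_{23}=R_{23}R_{13}R_{12}$ in $H\otimes H\otimes H$.
   Context: All vector spaces are over a field $k$, $\otimes=\otimes_k$. For a Hopf algebra $H$ with comultiplication $\Delta$, counit $\epsilon$, antipode $S$, we use Sweedler notation $\Delta(h)=h_1\otimes h_2$, etc. $\operatorname{Z}(H)$ is the centre of $H$. For $R\in H\otimes H$ we write $R=R^{(1)}\otimes R^{(2)}$ (summation understood); $R'^{(1)}\otimes R'^{(2)}$ denotes another copy of $R$. $R_{12}=R^{(1)}\otimes R^{(2)}\otimes 1$, $R_{13}=R^{(1)}\otimes 1\otimes R^{(2)}$, $R_{23}=1\otimes R^{(1)}\otimes R^{(2)}$. Definition (semiquasitriangular Hopf algebra): a pair $(H,R)$ with $H$ a Hopf algebra with bijective antipode and $R\in H\otimes H$ invertible such that (1) $R^{(1)}_1\otimes R^{(1)}_2\otimes R^{(2)} = R^{(1)}\otimes R'^{(1)}\otimes R^{(2)}R'^{(2)}$; (2) $R^{(1)}\otimes R^{(2)}_1\otimes R^{(2)}_2 = R^{(1)}R'^{(1)}\otimes R'^{(2)}\otimes R^{(2)}$; (3) $R^{(1)}\otimes R^{(2)}_2R'^{(1)}\otimes R^{(2)}_1R'^{(2)} = R^{(1)}\otimes R'^{(1)}R^{(2)}_1\otimes R'^{(2)}R^{(2)}_2$; (4) $R^{(1)}_2R'^{(1)}\otimes R^{(1)}_1R'^{(2)}\otimes R^{(2)} = R'^{(1)}R^{(1)}_1\otimes R'^{(2)}R^{(1)}_2\otimes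 R^{(2)}$; (5) $\nu(h):=R^{(2)}h_2R'^{(2)}\otimes S(h_1)S(R^{(1)})h_3R'^{(1)}\in H\otimes\operatorname{Z}(H)$ for all $h\in H$; (6) $\nu(h)=R^{(1)}h_2R'^{(1)}\otimes S(R'^{(2)})S(h_1)R^{(2)}h_3$ for all $h\in H$. *)

From HB Require Import structures.
From mathcomp Require Import all_boot all_order all_algebra.
Set Implicit Arguments. Unset Strict Implicit. Unset Printing Implicit Defensive.
Import GRing.Theory.
Local Open Scope ring_scope.

Section Tensors.
Variables (k : fieldType) (H : algType k).

(* A tensor in H (x) H (resp. H (x) H (x) H) is represented by a finite list of
   simple tensors, read as their sum. *)
Definition tens2 := seq (H * H).
Definition tens3 := seq (H * H * H).

(* Evaluation against linear functionals: the canonical map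
   H (x) H -> Bil(dual H, dual H), which is injective over a field.  Two
   representatives denote the same element of the tensor product iff they
   have the same evaluations. *)
Definition ev2 (f g : {scalar H}) (t : tens2) : k :=
  \sum_(p <- t) f p.1 * g p.2.
Definition ev3 (f g h : {scalar H}) (t : tens3) : k :=
  \sum_(p <- t) f p.1.1 * g p.1.2 * h p.2.

Definition teq2 (t u : tens2) : Prop := forall f g, ev2 f g t = ev2 f g u.
Definition teq3 (t u : tens3) : Prop := forall f g h, ev3 f g h t = ev3 f g h u.

Definition mul2 (t u : tens2) : tens2 :=
  [seq (p.1 * q.1, p.2 * q.2) | p <- t, q <- u].
Definition mul3 (t u : tens3) : tens3 :=
  [seq (p.1.1 * q.1.1, p.1.2 * q.1.2, p.2 * q.2) | p <- t, q <- u].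

Definition scale2 (a : k) (t : tens2) : tens2 := [seq (a *: p.1, p.2) | p <- t].

Definition leg12 (R : tens2) : tens3 := [seq (p.1, p.2, 1) | p <- R].
Definition leg13 (R : tens2) : tens3 := [seq (p.1, 1, p.2) | p <- R].
Definition leg23 (R : tens2) : tens3 := [seq (1, p.1, p.2) | p <- R].

Definition central (z : H) : Prop := forall x : H, x * z = z * x.

Variables (Delta : H -> tens2) (eps : {scalar H}) (S : {linear H -> H}).

Definition DeltaL (t : tens2) : tens3 :=
  flatten [seq [seq (q.1, q.2, p.2) | q <- Delta p.1] | p <- t].
Definition DeltaR (t : tens2) : tens3 :=
  flatten [seq [seq (p.1, q.1, q.2) | q <- Delta p.2] | p <- t].

Definition Delta3 (h : H) : tens3 := DeltaL (Delta h).

Definition is_hopf : Prop :=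
      (forall (a : k) (x y : H), teq2 (Delta (a *: x + y)) (scale2 a (Delta x) ++ Delta y)) /\
      (forall x y : H, teq2 (Delta (x * y)) (mul2 (Delta x) (Delta y))) /\
      teq2 (Delta 1) [:: (1, 1)] /\
      (forall x : H, teq3 (DeltaL (Delta x)) (DeltaR (Delta x))) /\
      (forall x : H, \sum_(p <- Delta x) eps p.1 *: p.2 = x /\
                     \sum_(p <- Delta x) eps p.2 *: p.1 = x) /\
      ((forall x y : H, eps (x * y) = eps x * eps y) /\ eps 1 = 1) /\
      (forall x : H, \sum_(p <- Delta x) S p.1 * p.2 = eps x *: 1 /\
                     \sum_(p <- Delta x) p.1 * S p.2 = eps x *: 1).

Definition tinvertible (R : tens2) : Prop :=
  exists Ri : tens2, teq2 (mul2 R Ri) [:: (1, 1)] /\ teq2 (mul2 Ri R) [:: (1, 1)].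

(* nu(h) = R^(2) h_2 R'^(2) (x) S(h_1) S(R^(1)) h_3 R'^(1) *)
Definition nu (R : tens2) (h : H) : tens2 :=
  [seq (rs.1.2 * x.1.2 * rs.2.2, S x.1.1 * S rs.1.1 * x.2 * rs.2.1)
  | x <- Delta3 h, rs <- [seq (r, s) | r <- R, s <- R]].

Definition semiquasitriangular (R : tens2) : Prop :=
  is_hopf /\ bijective S /\ tinvertible R /\
      teq3 (DeltaL R) [seq (r.1, s.1, r.2 * s.2) | r <- R, s <- R] /\
      teq3 (DeltaR R) [seq (r.1 * s.1, s.2, r.2) | r <- R, s <- R] /\
      teq3 [seq (r.1, bs.1.2 * bs.2.1, bs.1.1 * bs.2.2)
             | r <- R, bs <- [seq (b, s) | b <- Delta r.2, s <- R]]
           [seq (r.1, bs.2.1 * bs.1.1, bs.2.2 * bs.1.2)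
             | r <- R, bs <- [seq (b, s) | b <- Delta r.2, s <- R]] /\
      teq3 [seq (as_.1.2 * as_.2.1, as_.1.1 * as_.2.2, r.2)
             | r <- R, as_ <- [seq (a, s) | a <- Delta r.1, s <- R]]
           [seq (as_.2.1 * as_.1.1, as_.2.2 * as_.1.2, r.2)
             | r <- R, as_ <- [seq (a, s) | a <- Delta r.1, s <- R]] /\
      (forall h : H, exists t : tens2,
          (forall p, p \in t -> central p.2) /\ teq2 (nu R h) t) /\
      (forall h : H, teq2 (nu R h)
         [seq (rs.1.1 * x.1.2 * rs.2.1, S rs.2.2 * S x.1.1 * rs.1.2 * x.2)
         | x <- Delta3 h, rs <- [seq (r, s) | r <- R, s <- R]]).

End Tensors.

(* Condition (2) says (id (x) Delta)(R) = R_13 R_12, so after swapping the last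
   two legs it also says R_12 R_13 = (id (x) Delta^op)(R).  Condition (3) reads
   (id (x) Delta^op)(R) R_23 = R_23 (id (x) Delta)(R), and substituting both
   descriptions of the coproduct of R gives the Yang-Baxter equation.
   Tensors are compared through triples of linear functionals; replacing the
   functionals by their translates x |-> g (x a) or x |-> g (a x) shows that
   this comparison is compatible with multiplication. *)
From HB Require Import structures.
From mathcomp Require Import all_boot all_order all_algebra.
Set Implicit Arguments. Unset Strict Implicit. Unset Printing Implicit Defensive.
Import GRing.Theory.
Local Open Scope ring_scope.

Section ScalarTranslates.
Variables (k : fieldType) (H : algType k) (g : {scalar H}) (a : H).

Definition scalar_mulr (x : H) : k := g (x * a).
Definition scalar_mull (x : H) : k := g (a * x).

Fact scalar_mulr_is_linear : linear_for *%R scalar_mulr.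
Proof. by move=> c x y; rewrite /scalar_mulr mulrDl -scalerAl linearP. Qed.

Fact scalar_mull_is_linear : linear_for *%R scalar_mull.
Proof. by move=> c x y; rewrite /scalar_mull mulrDr -scalerAr linearP. Qed.

HB.instance Definition _ :=
  GRing.isLinear.Build k H k *%R scalar_mulr scalar_mulr_is_linear.
HB.instance Definition _ :=
  GRing.isLinear.Build k H k *%R scalar_mull scalar_mull_is_linear.

End ScalarTranslates.

Section TripleTensors.
Variables (k : fieldType) (H : algType k).
Implicit Types (t u v : tens3 H) (f g h : {scalar H}).

Lemma teq3_sym t u : teq3 t u -> teq3 u t.
Proof. by move=> tu f g h; rewrite tu. Qed.

Lemma teq3_trans t u v : teq3 t u -> teq3 u v -> teq3 t v.
Proof. by move=> tu uv f g h; rewrite tu uv. Qed.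

Lemma ev3_mul3 f g h t u :
  ev3 f g h (mul3 t u) = \sum_(p <- t) \sum_(q <- u)
     f (p.1.1 * q.1.1) * g (p.1.2 * q.1.2) * h (p.2 * q.2).
Proof. by rewrite /ev3 /mul3 big_allpairs_dep. Qed.

Lemma ev3_mul3l f g h t u : ev3 f g h (mul3 t u) =
  \sum_(q <- u) ev3 (scalar_mulr f q.1.1) (scalar_mulr g q.1.2) (scalar_mulr h q.2) t.
Proof. by rewrite ev3_mul3 exchange_big. Qed.

Lemma ev3_mul3r f g h t u : ev3 f g h (mul3 t u) =
  \sum_(p <- t) ev3 (scalar_mull f p.1.1) (scalar_mull g p.1.2) (scalar_mull h p.2) u.
Proof. by rewrite ev3_mul3. Qed.

Lemma mul3_teq3l t t' u : teq3 t t' -> teq3 (mul3 t u) (mul3 t' u).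
Proof. by move=> tt' f g h; rewrite !ev3_mul3l; apply: eq_bigr => q _; apply: tt'. Qed.

Lemma mul3_teq3r t u u' : teq3 u u' -> teq3 (mul3 t u) (mul3 t u').
Proof. by move=> uu' f g h; rewrite !ev3_mul3r; apply: eq_bigr => p _; apply: uu'. Qed.

Lemma mul3A t u v : teq3 (mul3 (mul3 t u) v) (mul3 t (mul3 u v)).
Proof.
move=> f g h; rewrite !ev3_mul3 /mul3 big_allpairs_dep.
apply: eq_bigr => p _; rewrite big_allpairs_dep.
by apply: eq_bigr => q _; apply: eq_bigr => r _; rewrite !mulrA.
Qed.

Definition flip23 t : tens3 H := [seq (p.1.1, p.2, p.1.2) | p <- t].

Lemma ev3_flip23 f g h t : ev3 f g h (flip23 t) = ev3 f h g t.
Proof. by rewrite /ev3 big_map; apply: eq_bigr => p _; rewrite mulrAC. Qed.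

Lemma flip23_teq3 t u : teq3 t u -> teq3 (flip23 t) (flip23 u).
Proof. by move=> tu f g h; rewrite !ev3_flip23. Qed.

End TripleTensors.

Section YangBaxter.
Variables (k : fieldType) (H : algType k) (Delta : H -> tens2 H) (R : tens2 H).

Hypothesis DeltaR_R :
  teq3 (DeltaR Delta R) [seq (r.1 * s.1, s.2, r.2) | r <- R, s <- R].

Hypothesis R_intertwines :
  teq3 [seq (r.1, bs.1.2 * bs.2.1, bs.1.1 * bs.2.2)
         | r <- R, bs <- [seq (b, s) | b <- Delta r.2, s <- R]]
       [seq (r.1, bs.2.1 * bs.1.1, bs.2.2 * bs.1.2)
         | r <- R, bs <- [seq (b, s) | b <- Delta r.2, s <- R]].

Lemma leg13_leg12 : teq3 (mul3 (leg13 R) (leg12 R)) (DeltaR Delta R).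
Proof.
apply: teq3_sym; apply: teq3_trans DeltaR_R _ => f g h.
rewrite ev3_mul3 /ev3 big_allpairs_dep /leg13 big_map.
by apply: eq_bigr => r _; rewrite /leg12 big_map; apply: eq_bigr => s _ /=;
  rewrite mul1r mulr1.
Qed.

Lemma leg12_leg13 : teq3 (mul3 (leg12 R) (leg13 R)) (flip23 (DeltaR Delta R)).
Proof.
apply: teq3_trans (flip23_teq3 (teq3_sym DeltaR_R)) => f g h.
rewrite ev3_mul3 ev3_flip23 /ev3 big_allpairs_dep /leg12 big_map.
apply: eq_bigr => r _; rewrite /leg13 big_map; apply: eq_bigr => s _ /=.
by rewrite mul1r mulr1 mulrAC.
Qed.

Lemma DeltaR_leg23 :
  teq3 (mul3 (flip23 (DeltaR Delta R)) (leg23 R))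
       (mul3 (leg23 R) (DeltaR Delta R)).
Proof.
move=> f g h.
transitivity (ev3 f g h [seq (r.1, bs.1.2 * bs.2.1, bs.1.1 * bs.2.2)
         | r <- R, bs <- [seq (b, s) | b <- Delta r.2, s <- R]]).
  rewrite ev3_mul3 /flip23 big_map /DeltaR big_allpairs_dep.
  rewrite /ev3 big_allpairs_dep; apply: eq_bigr => r _.
  rewrite big_allpairs_dep; apply: eq_bigr => b _.
  by rewrite /leg23 big_map; apply: eq_bigr => s _ /=; rewrite mulr1.
rewrite R_intertwines ev3_mul3 /leg23 big_map exchange_big /DeltaR.
rewrite /ev3 !big_allpairs_dep; apply: eq_bigr => r _.
rewrite big_allpairs_dep; apply: eq_bigr => b _.
by apply: eq_bigr => s _ /=; rewrite mul1r.
Qed.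

Lemma yang_baxter :
  teq3 (mul3 (mul3 (leg12 R) (leg13 R)) (leg23 R))
       (mul3 (mul3 (leg23 R) (leg13 R)) (leg12 R)).
Proof.
apply: teq3_trans (mul3_teq3l _ leg12_leg13) _.
apply: teq3_trans DeltaR_leg23 _.
apply: teq3_trans (mul3_teq3r _ (teq3_sym leg13_leg12)) _.
exact: teq3_sym (mul3A _ _ _).
Qed.

End YangBaxter.

Theorem proposition1p4 (k : fieldType) (H : algType k)
    (Delta : H -> tens2 H) (eps : {scalar H}) (S : {linear H -> H})
    (R : tens2 H) :
  semiquasitriangular Delta eps S R ->
  teq3 (mul3 (mul3 (leg12 R) (leg13 R)) (leg23 R))
       (mul3 (mul3 (leg23 R) (leg13 R)) (leg12 R)).
Proof.
move=> [_ [_ [_ [_ [DeltaR_R [R_intertwines _]]]]]].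
exact: yang_baxter DeltaR_R R_intertwines.
Qed.
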